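(* In the full-information online setting for length-$\ell$ menus of lotteries over $m$ items, when every buyer is one of $V$ known types (arriving in an arbitrary order), there is an algorithm with regret $O\big(m^2H\ell\sqrt T\ln(V\ell)\big)$.
   Context: A length-$\ell$ menu of lotteries over $m$ items consists of entries $(\vec\phi^{(j)},p^{(j)})$, $j=1,\dots,\ell$, with $\vec\phi^{(j)}\in[0,1]^m$, $p^{(j)}\in[0,mH]$, plus the null entry $(\vec0,0)$. A buyer with item values $v(\vec e_i)\in[0,H]$ (additive or unit-demand) selects an entry maximizing $\sum_i v(\vec e_i)\phi^{(j)}[i]-p^{(j)}$ and pays its price (the revenue). In full information the learner observes the revenue of every menu after each round. Regret is $\mathbb E[\max_{\vec\rho}\sum_t u_t(\vec\rho)-\sum_t u_t(\vec\rho_t)]$ over all length-$\ell$ menus. *)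

From Stdlib Require Lists.List.
From mathcomp Require Import all_boot all_order all_algebra.
From mathcomp Require Import reals exp.
Set Implicit Arguments. Unset Strict Implicit. Unset Printing Implicit Defensive.
Import Order.TTheory GRing.Theory Num.Theory.
Local Open Scope ring_scope.

Section Menus.
Variables (R : realType) (m l : nat).

(* A menu entry (phi, p): lottery phi in [0,1]^m and price p. *)
Definition entry := (('I_m -> R) * R)%type.
(* A length-l menu (the null entry (0,0) is implicit). *)
Definition menu := 'I_l -> entry.

Definition menu_ok (H : R) (rho : menu) : Prop :=
  forall j : 'I_l,
    (forall i : 'I_m, 0 <= (rho j).1 i <= 1) /\ 0 <= (rho j).2 <= m%:R * H.

Definition entry_util (v : 'I_m -> R) (e : entry) : R :=
  \sum_(i < m) v i * e.1 i - e.2.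

(* Maximal buyer utility, including the null entry (utility 0). *)
Definition best_util (v : 'I_m -> R) (rho : menu) : R :=
  \big[Num.max/0]_(j < l) entry_util v (rho j).

(* Revenue: price of the selected utility-maximising entry; ties are broken
   in favour of the highest price (the null entry has price 0). *)
Definition revenue (v : 'I_m -> R) (rho : menu) : R :=
  \big[Num.max/0]_(j < l | entry_util v (rho j) == best_util v rho) (rho j).2.

(* A (possibly randomised) full-information online algorithm: given the
   revenue functions of all previous rounds, it outputs a finitely supported
   distribution over menus, as a list of (probability, menu) pairs. *)
Definition algorithm := seq (menu -> R) -> seq (R * menu).

Definition alg_valid (H : R) (A : algorithm) : Prop :=
  forall h, (forall wr, Stdlib.Lists.List.In wr (A h) -> 0 <= wr.1 /\ menu_ok H wr.2) /\
            \sum_(wr <- A h) wr.1 = 1.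

(* Revenue functions observed before round t (rounds numbered from 0). *)
Definition history (u : nat -> menu -> R) (t : nat) : seq (menu -> R) :=
  [seq u k | k <- iota 0 t].

Definition alg_exp_rev (A : algorithm) (u : nat -> menu -> R) (t : nat) : R :=
  \sum_(wr <- A (history u t)) wr.1 * u t wr.2.

End Menus.

(* Regret O(m^2 H l sqrt(T) ln(V l)) for length-l menus of lotteries against V
   known buyer types, by reduction to prediction with finitely many experts.
   - Vertex lemma: on a bounded polyhedron (over any real field), every point
     is dominated, for a linear objective, by a vertex, the solution of n
     linearly independent tight constraints.
   - Hedge over N experts with rewards in [0,B] has regret ln N/eta + 2 eta B^2 T.
   - Covering: a menu is a point of R^(l(m+1)).  Fixing the option each type
     buys in a menu rho cuts out a bounded polyhedron (with the price/lottery
     box) on which revenue dominates a linear function equal to rho's revenue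
     at rho; a vertex of it, i.e. a choice of l(m+1) constraints from a finite
     list, is an expert earning at least as much as rho.
   - The theorem (C = 100): Hedge with eta = 1/(2 H sqrt T) when m <= sqrt T,
     the trivial bound T m H otherwise, and the best expert if V = 1. *)

From mathcomp Require Import all_boot all_order all_algebra.
From mathcomp Require Import reals exp sequences.
From mathcomp Require Import ring lra zify.
From mathcomp Require boolp.
From Stdlib Require Lists.List.
Set Implicit Arguments. Unset Strict Implicit. Unset Printing Implicit Defensive.
Import Order.TTheory GRing.Theory Num.Theory.
Local Open Scope ring_scope.

Lemma rank_deficient_kernel (R : fieldType) (n : nat) (M : 'M[R]_n) :
  (\rank M < n)%N -> exists2 w : 'cV[R]_n, w != 0 & M *m w = 0.
Proof.
move=> rkM; have : \det M^T == 0.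
  apply: contraTT rkM => det0; rewrite -leqNgt -mxrank_tr.
  by rewrite (eqP (_ : row_free M^T)) // row_free_unit unitmxE unitfE.
case/det0P => v v0 vM; exists v^T; first by rewrite trmx_eq0.
by rewrite -(trmxK M) -trmx_mul vM trmx0.
Qed.

(* The polyhedron is given by the
   constraints a r . x <= b r for the active indices r; it is bounded in the
   sense that every nonzero direction w is blocked by some active constraint. *)
Section Vertex.
Variables (R : realFieldType) (n : nat) (I : finType).
Variables (a : I -> 'rV[R]_n) (b : I -> R) (act : pred I) (c : 'rV[R]_n).

Definition dotv (u : 'rV[R]_n) (x : 'cV[R]_n) : R := (u *m x) 0 0.

Lemma dotvBl u u' x : dotv (u - u') x = dotv u x - dotv u' x.
Proof. by rewrite /dotv mulmxBl !mxE. Qed.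
Lemma dotvNl u x : dotv (- u) x = - dotv u x.
Proof. by rewrite /dotv mulNmx !mxE. Qed.
Lemma dotv_suml (J : Type) (r : seq J) (P : pred J) (F : J -> 'rV[R]_n) x :
  dotv (\sum_(t <- r | P t) F t) x = \sum_(t <- r | P t) dotv (F t) x.
Proof. by rewrite /dotv mulmx_suml summxE. Qed.
Lemma dotvD u x y : dotv u (x + y) = dotv u x + dotv u y.
Proof. by rewrite /dotv mulmxDr mxE. Qed.
Lemma dotvZ u k x : dotv u (k *: x) = k * dotv u x.
Proof. by rewrite /dotv -scalemxAr mxE. Qed.
Lemma dotvN u x : dotv u (- x) = - dotv u x.
Proof. by rewrite /dotv mulmxN mxE. Qed.

Definition feasible x := forall r, act r -> dotv (a r) x <= b r.

Hypothesis bounded :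
  forall w : 'cV[R]_n, w != 0 -> exists2 r, act r & 0 < dotv (a r) w.

Definition stack (g : 'I_n -> I) (k : nat) : 'M[R]_n :=
  \matrix_(i < n) (if (i < k)%N then a (g i) else 0).

Definition set_constr (g : 'I_n -> I) (k : nat) (r : I) : 'I_n -> I :=
  fun i => if i == k :> nat then r else g i.

Definition partial_vertex k g x x0 := [/\ feasible x, dotv c x0 <= dotv c x,
  \rank (stack g k) = k & forall i : 'I_n, (i < k)%N -> dotv (a (g i)) x = b (g i)].

Lemma row_stack (g : 'I_n -> I) k (i : 'I_n) :
  row i (stack g k) = if (i < k)%N then a (g i) else 0.
Proof. exact: rowK. Qed.

Lemma stack_dot (g : 'I_n -> I) k w (i : 'I_n) :
  (i < k)%N -> dotv (a (g i)) w = (stack g k *m w) i 0.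
Proof.
move=> ik; have := congr1 (fun M : 'M_(1, 1) => M 0 0) (row_mul i (stack g k) w).
by rewrite /dotv row_stack ik => <-; rewrite mxE.
Qed.

Lemma feasible_move x w lam : feasible x -> 0 <= lam ->
  (forall r, act r -> 0 < dotv (a r) w -> lam * dotv (a r) w <= b r - dotv (a r) x) ->
  feasible (x + lam *: w).
Proof.
move=> fx lam0 hmin r ar; rewrite dotvD dotvZ.
case: (ltrP 0 (dotv (a r) w)) => hr; first by have := hmin r ar hr; lra.
have := fx r ar; have : lam * dotv (a r) w <= 0 by rewrite mulr_ge0_le0.
lra.
Qed.

Lemma rank_set_constr g k r w : (k < n)%N -> \rank (stack g k) = k ->
  stack g k *m w = 0 -> 0 < dotv (a r) w ->
  \rank (stack (set_constr g k r) k.+1) = k.+1.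
Proof.
move=> kn rk Mw pos.
have eqM : (stack (set_constr g k r) k.+1 == stack g k + a r)%MS.
  apply/andP; split.
  - apply/row_subP => i; rewrite row_stack /set_constr.
    case: ifP => ik; last by rewrite sub0mx.
    case: eqP => [_|ne]; first exact: addsmxSr.
    have ik' : (i < k)%N by rewrite ltn_neqAle (introN eqP ne) -ltnS ik.
    apply: submx_trans (addsmxSl _ _).
    by rewrite -[a (g i)]/(if true then a (g i) else 0) -ik' -row_stack row_sub.
  - rewrite addsmx_sub; apply/andP; split.
      apply/row_subP => i; rewrite row_stack; case: ifP => ik; last by rewrite sub0mx.
      have -> : a (g i) = row i (stack (set_constr g k r) k.+1).
        by rewrite row_stack (ltnW ik : (i < k.+1)%N) /set_constr (ltn_eqF ik).
      exact: row_sub.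
    have -> : a r = row (Ordinal kn) (stack (set_constr g k r) k.+1).
      by rewrite row_stack /= ltnSn /set_constr eqxx.
    exact: row_sub.
rewrite (eqmx_rank eqM); apply/eqP; rewrite eqn_leq; apply/andP; split.
  have [le2 _] := mxrank_adds_leqif (stack g k) (a r).
  by apply: (leq_trans le2); rewrite rk -[k.+1]addn1 leq_add2l rank_leq_row.
(* a r is not in the row space of the first k rows, since it does not vanish on w *)
rewrite ltnNge; apply/negP => hle.
have [le1 eq1] := mxrank_leqif_sup (addsmxSl (stack g k) (a r)).
have : \rank (stack g k) == \rank (stack g k + a r)%MS by rewrite eqn_leq le1 rk hle.
rewrite eq1 addsmx_sub => /andP [_ /submxP [D hD]].
by move: pos; rewrite /dotv hD -mulmxA Mw mulmx0 mxE ltxx.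
Qed.

(* One more constraint can be made tight without decreasing the objective:
   move along a kernel direction of nonnegative objective until the first
   constraint becomes tight. *)
Lemma partial_vertex_step k g x x0 : (k < n)%N -> partial_vertex k g x x0 ->
  exists g' x', partial_vertex k.+1 g' x' x0.
Proof.
move=> kn [fx cx rk tight].
have [w0 w0_neq0 Mw0] : exists2 w0 : 'cV[R]_n, w0 != 0 & stack g k *m w0 = 0.
  by apply: rank_deficient_kernel; rewrite rk.
pose w := if 0 <= dotv c w0 then w0 else - w0.
have w_neq0 : w != 0 by rewrite /w; case: ifP => // _; rewrite oppr_eq0.
have Mw : stack g k *m w = 0 by rewrite /w; case: ifP => // _; rewrite mulmxN Mw0 oppr0.
have cw : 0 <= dotv c w.
  by rewrite /w; case: ifP => // /negbT; rewrite dotvN -ltNge oppr_ge0 => /ltW.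
pose P r := act r && (0 < dotv (a r) w).
pose ratio r := (b r - dotv (a r) x) / dotv (a r) w.
have [r1 act1 pos1] := bounded w_neq0.
have P1 : P r1 by rewrite /P act1 pos1.
case: (arg_minP ratio P1) => rs /andP [acts poss] minrs.
have lam0 : 0 <= ratio rs by rewrite /ratio divr_ge0 ?subr_ge0 ?fx // ltW.
exists (set_constr g k rs), (x + ratio rs *: w); split.
- apply: feasible_move => // r ar hr.
  by rewrite -ler_pdivlMr // minrs // /P ar hr.
- have : 0 <= ratio rs * dotv c w by rewrite mulr_ge0.
  rewrite dotvD dotvZ; lra.
- exact: rank_set_constr kn rk Mw poss.
- move=> i; rewrite ltnS leq_eqVlt /set_constr dotvD dotvZ => /orP [/eqP ->|ik].
    by rewrite eqxx /ratio divfK ?gt_eqF //; ring.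
  by rewrite (ltn_eqF ik) (stack_dot _ w ik) Mw mxE mulr0 addr0 tight.
Qed.

Lemma lp_vertex (r0 : I) x0 : feasible x0 -> exists (g : 'I_n -> I) (x : 'cV[R]_n),
  [/\ feasible x, dotv c x0 <= dotv c x, \matrix_(i < n) a (g i) \in unitmx &
      (\matrix_(i < n) a (g i)) *m x = \col_(i < n) b (g i)].
Proof.
move=> f0.
have build k : (k <= n)%N -> exists g x, partial_vertex k g x x0.
  elim: k => [_|k IH kn]; last first.
    by have [g [x pv]] := IH (ltnW kn); exact: partial_vertex_step pv.
  exists (fun _ => r0), x0; split => //.
  suff -> : stack (fun _ => r0) 0 = 0 by rewrite mxrank0.
  by apply/row_matrixP => i; rewrite row_stack row0.
have [g [x [fx cx rk tight]]] := build n (leqnn n).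
have eM : stack g n = \matrix_(i < n) a (g i).
  by apply/row_matrixP => i; rewrite row_stack ltn_ord rowK.
exists g, x; split => //; first by rewrite -row_full_unit /row_full -eM rk.
apply/matrixP => i j; rewrite (ord1 j) -eM -stack_dot ?ltn_ord // tight ?ltn_ord //.
by rewrite mxE.
Qed.

End Vertex.

Lemma expR_le_quad (R : realType) (y : R) : 0 <= y <= 1/2 -> expR y <= 1 + y + 2 * y^+2.
Proof.
move=> /andP [y0 y1]; have ep := expR_gt0 y.
have inv_bound : expR y * (1 - y) <= 1.
  have := expR_ge1Dx (- y); rewrite expRN => h.
  have : expR y * (1 - y) <= expR y * (expR y)^-1 by apply: ler_wpM2l; [exact: ltW|].
  by rewrite divff ?gt_eqF.
nra.
Qed.

Section Hedge.
Variables (R : realType) (E : finType) (e0 : E) (g : nat -> E -> R) (eta B : R).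
Hypotheses (g_bound : forall t e, 0 <= g t e <= B) (eta_gt0 : 0 < eta)
  (etaB_small : eta * B <= 1/2).

Definition cumul t e := \sum_(k < t) g k e.
Definition weight t e := expR (eta * cumul t e).
Definition total_weight t := \sum_e weight t e.
Definition hedge_prob t e := weight t e / total_weight t.
Definition hedge_gain t := \sum_e hedge_prob t e * g t e.
Definition hedge_total T := \sum_(t < T) hedge_gain t.

Lemma weight_le_total t e : weight t e <= total_weight t.
Proof.
by rewrite /total_weight (bigD1 e) //= lerDl; apply: sumr_ge0 => i _; exact: expR_ge0.
Qed.

Lemma total_weight_gt0 t : 0 < total_weight t.
Proof. exact: lt_le_trans (expR_gt0 _) (weight_le_total t e0). Qed.

Lemma total_weight_step t :
  total_weight t.+1 <= total_weight t * expR (eta * hedge_gain t + 2 * eta^+2 * B^+2).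
Proof.
set K := 2 * eta^+2 * B^+2; have W0 := total_weight_gt0 t.
apply: (@le_trans _ _ (total_weight t * (1 + eta * hedge_gain t + K))); last first.
  by rewrite -addrA ler_wpM2l ?expR_ge1Dx // ltW.
apply: (@le_trans _ _ (\sum_e (weight t e * (1 + eta * g t e + K)))).
  rewrite /total_weight; apply: ler_sum => e _.
  rewrite /weight /cumul big_ord_recr /= mulrDr expRD ler_wpM2l ?expR_ge0 //.
  have /andP [g0 gB] := g_bound t e.
  have y0 : 0 <= eta * g t e by rewrite mulr_ge0 // ltW.
  have y1 : eta * g t e <= eta * B by rewrite ler_wpM2l // ltW.
  apply: le_trans (expR_le_quad _) _; first by rewrite y0 /= (le_trans y1).
  rewrite lerD2l /K; nra.
have -> : \sum_e (weight t e * (1 + eta * g t e + K)) = \sum_e (weight t e +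
    eta * (total_weight t * (hedge_prob t e * g t e)) + K * weight t e).
  by apply: eq_bigr => e _; rewrite /hedge_prob; field; rewrite gt_eqF.
rewrite !big_split /= -!mulr_sumr -/(total_weight t) -/(hedge_gain t).
by rewrite le_eqVlt; apply/orP; left; apply/eqP; ring.
Qed.

Lemma total_weight_bound T :
  total_weight T <= #|E|%:R * expR (eta * hedge_total T + 2 * eta^+2 * B^+2 * T%:R).
Proof.
elim: T => [|T IH].
  rewrite /hedge_total big_ord0 !mulr0 addr0 expR0 mulr1 /total_weight.
  under eq_bigr do rewrite /weight /cumul big_ord0 mulr0 expR0.
  by rewrite sumr_const.
apply: le_trans (total_weight_step T) _.
apply: le_trans (ler_wpM2r (expR_ge0 _) IH) _.
rewrite -[X in X <= _]mulrA -expRD /hedge_total big_ord_recr /= -/(hedge_total T) -addn1 natrD.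
by rewrite le_eqVlt; apply/orP; left; apply/eqP; congr (_ * expR _); ring.
Qed.

Lemma hedge_regret T e :
  cumul T e - hedge_total T <= ln #|E|%:R / eta + 2 * eta * B^+2 * T%:R.
Proof.
have N0 : (0 < #|E|%:R :> R) by rewrite ltr0n; apply/card_gt0P; exists e0.
have := le_trans (weight_le_total T e) (total_weight_bound T).
rewrite -ler_ln ?posrE ?mulr_gt0 ?expR_gt0 // /weight expRK lnM ?posrE ?expR_gt0 //.
rewrite expRK => hh; rewrite -(ler_pM2l eta_gt0).
have -> : eta * (ln #|E|%:R / eta + 2 * eta * B ^+ 2 * T%:R) =
   ln #|E|%:R + 2 * eta^+2 * B ^+ 2 * T%:R by field; rewrite gt_eqF.
lra.
Qed.

End Hedge.

Section Revenue.
Variables (R : realType) (m l : nat).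
Local Notation menuT := (menu R m l).

(* An option of the buyer is an entry (Some j) or the null entry (None). *)
Definition opt_util (v : 'I_m -> R) (rho : menuT) (o : option 'I_l) : R :=
  if o is Some j then entry_util v (rho j) else 0.
Definition opt_price (rho : menuT) (o : option 'I_l) : R :=
  if o is Some j then (rho j).2 else 0.
Definition best_choice v (rho : menuT) (o : option 'I_l) : bool :=
  [forall o', opt_util v rho o' <= opt_util v rho o].

Lemma bigmax_cases (J : finType) (P : pred J) (F : J -> R) (x0 : R) :
  \big[Num.max/x0]_(j | P j) F j = x0 \/
  exists2 j, P j & \big[Num.max/x0]_(j | P j) F j = F j.
Proof.
apply: (big_rec (fun y => y = x0 \/ exists2 j, P j & y = F j)); first by left.
by move=> j y Pj hy; case: (lerP (F j) y) => _; [|right; exists j].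
Qed.

Lemma revenue_ge0 v (rho : menuT) : 0 <= revenue v rho.
Proof. exact: bigmax_ge_id. Qed.

Lemma revenue_le v (H : R) (rho : menuT) : 0 <= H -> menu_ok H rho ->
  revenue v rho <= m%:R * H.
Proof.
move=> H0 ok; apply/bigmax_leP; split => [|j _]; first by rewrite mulr_ge0 ?ler0n.
by have [_ /andP []] := ok j.
Qed.

Lemma revenue_ge v (rho : menuT) o : best_choice v rho o -> opt_price rho o <= revenue v rho.
Proof.
case: o => [j|] /= /forallP best; last exact: revenue_ge0.
rewrite /revenue; have -> : best_util v rho = entry_util v (rho j).
  apply/eqP; rewrite eq_le le_bigmax andbT; apply/bigmax_leP.
  by split => [|i _]; [exact: (best None) | exact: (best (Some i))].
exact: le_bigmax_cond.
Qed.

Lemma revenue_attained v H (rho : menuT) : menu_ok H rho ->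
  exists o, best_choice v rho o && (opt_price rho o == revenue v rho).
Proof.
move=> ok.
have bestP j : entry_util v (rho j) = best_util v rho -> best_choice v rho (Some j).
  move=> e; apply/forallP => -[j'|] /=; rewrite e; first exact: le_bigmax.
  exact: bigmax_ge_id.
have [rev0|[j /eqP ej rj]] := bigmax_cases
   (fun j => entry_util v (rho j) == best_util v rho) (fun j => (rho j).2) 0; last first.
  by exists (Some j); rewrite bestP //= /revenue rj eqxx.
rewrite -/(revenue v rho) in rev0.
have [best0|[j _ bj]] := bigmax_cases xpredT (fun j => entry_util v (rho j)) 0.
  exists None; rewrite /= rev0 eqxx andbT; apply/forallP => -[j'|] //=.
  by rewrite -[X in _ <= X]best0; exact: le_bigmax.
exists (Some j); rewrite bestP //= rev0.
have := revenue_ge (bestP j (esym bj)); rewrite rev0 /= => h.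
by have [_ /andP [p0 _]] := ok j; rewrite eq_le h p0.
Qed.

End Revenue.

Section Experts.
Variables (R : realType) (m l V : nat) (H : R) (types : 'I_V -> 'I_m -> R).
Hypotheses (H_ge0 : 0 <= H) (l_gt0 : (0 < l)%N).

Local Notation d := (l * m.+1)%N.
Local Notation menuT := (menu R m l).

(* Menus as vectors of R^d: coordinate (j, 0) is the price of entry j and
   coordinate (j, i+1) the probability of item i in entry j. *)
Definition coef (x : 'cV[R]_d) (j : 'I_l) (i : 'I_m.+1) : R := x (mxvec_index j i) 0.
Definition menu_of_vec (x : 'cV[R]_d) : menuT :=
  fun j => (fun i => coef x j (lift ord0 i), coef x j ord0).
Definition menu_coord (rho : menuT) j (i : 'I_m.+1) : R :=
  if unlift ord0 i is Some i' then (rho j).1 i' else (rho j).2.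
Definition vec_of_menu (rho : menuT) : 'cV[R]_d :=
  (mxvec (\matrix_(j, i) menu_coord rho j i))^T.

Lemma coef_vec_of_menu rho j i : coef (vec_of_menu rho) j i = menu_coord rho j i.
Proof. by rewrite /coef /vec_of_menu mxE mxvecE mxE. Qed.

Lemma vec_of_menuK : cancel vec_of_menu menu_of_vec.
Proof.
move=> rho; apply: boolp.funext => j.
rewrite /menu_of_vec coef_vec_of_menu /menu_coord unlift_none.
have -> : (fun i => coef (vec_of_menu rho) j (lift ord0 i)) = (rho j).1.
  by apply: boolp.funext => i; rewrite coef_vec_of_menu /menu_coord liftK.
by case: (rho j).
Qed.

Lemma dot_mxvec (C : 'M[R]_(l, m.+1)) x :
  dotv (mxvec C) x = \sum_j \sum_i C j i * coef x j i.
Proof.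
rewrite /dotv mxE (reindex _ (curry_mxvec_bij _ _)) /= [RHS]pair_big /=.
by apply: eq_bigr => -[j i] _ /=; rewrite mxvecE.
Qed.

Lemma dot_delta j i x : dotv (mxvec (delta_mx j i)) x = coef x j i.
Proof. by rewrite mxvec_delta /dotv -rowE mxE. Qed.

Definition util_coef (v : 'I_m -> R) (i : 'I_m.+1) : R :=
  if unlift ord0 i is Some i' then v i' else -1.
Definition util_row v (o : option 'I_l) : 'rV[R]_d :=
  mxvec (\matrix_(j, i) (if o == Some j then util_coef v i else 0)).
Definition price_row (o : option 'I_l) : 'rV[R]_d :=
  if o is Some j then mxvec (delta_mx j ord0) else 0.

Lemma dot_util_row v o x : dotv (util_row v o) x = opt_util v (menu_of_vec x) o.
Proof.
rewrite dot_mxvec; case: o => [j0|] /=; last first.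
  by apply: big1 => j _; apply: big1 => i _; rewrite mxE mul0r.
rewrite (bigD1 j0) //= [X in _ + X]big1 ?addr0 => [|j nj]; last first.
  apply: big1 => i _; rewrite mxE; case: eqP => [[e]|]; last by rewrite mul0r.
  by rewrite e eqxx in nj.
under eq_bigr do rewrite mxE eqxx.
rewrite big_ord_recl /util_coef unlift_none /entry_util /menu_of_vec /=.
by under eq_bigr do rewrite liftK; rewrite /=; ring.
Qed.

Lemma dot_price_row o x : dotv (price_row o) x = opt_price (menu_of_vec x) o.
Proof. by case: o => [j|] /=; rewrite ?dot_delta // /dotv mul0mx mxE. Qed.

(* Constraint indices: inl (k, o, o') says that type k weakly prefers option
   o to o'; inr (j, i, true) bounds coordinate (j, i) from above and
   inr (j, i, false) bounds it from below by 0. *)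
Definition constr := ((('I_V * option 'I_l) * option 'I_l) + (('I_l * 'I_m.+1) * bool))%type.
Definition coord_bound (i : 'I_m.+1) : R := if i == ord0 then m%:R * H else 1.
Definition constr_row (r : constr) : 'rV[R]_d :=
  match r with
  | inl (k, o, o') => util_row (types k) o' - util_row (types k) o
  | inr (j, i, true) => mxvec (delta_mx j i)
  | inr (j, i, false) => - mxvec (delta_mx j i)
  end.
Definition constr_rhs (r : constr) : R :=
  if r is inr (_, i, true) then coord_bound i else 0.

Definition in_box (x : 'cV[R]_d) : bool :=
  [forall j, forall i, 0 <= coef x j i <= coord_bound i].
Definition null_menu : menuT := fun _ => (fun _ => 0, 0).

(* An expert is a choice of d constraints; it plays the solution of the
   corresponding linear system when that solution is unique and lies in the
   box, and the null menu otherwise. *)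
Definition expert_basis := {ffun 'I_d -> constr}.
Definition expert (G : expert_basis) : menuT :=
  let M := \matrix_(i < d) constr_row (G i) in
  let y := invmx M *m \col_(i < d) constr_rhs (G i) in
  if (M \in unitmx) && in_box y then menu_of_vec y else null_menu.

Lemma card_expert_basis :
  #|{: expert_basis}| = ((V * l.+1 * l.+1 + l * m.+1 * 2) ^ d)%N.
Proof. by rewrite card_ffun card_sum !card_prod !card_option !card_ord card_bool. Qed.

Lemma in_box_ok x : in_box x -> menu_ok H (menu_of_vec x).
Proof.
move=> /forallP box j; have /forallP box_j := box j; split => [i|].
  by have := box_j (lift ord0 i); rewrite /coord_bound eq_sym (negbTE (neq_lift _ _)).
by have := box_j ord0; rewrite /coord_bound eqxx.
Qed.

Lemma expert_ok G : menu_ok H (expert G).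
Proof.
rewrite /expert; case: ifP => [/andP [_ /in_box_ok //]|_] j.
by split => [i|] /=; rewrite ?lexx ?ler01 ?mulr_ge0.
Qed.

Definition chosen (rho : menuT) (k : 'I_V) : option 'I_l :=
  odflt None [pick o | best_choice (types k) rho o && (opt_price rho o == revenue (types k) rho)].

Lemma chosenP rho k : menu_ok H rho -> best_choice (types k) rho (chosen rho k) &&
  (opt_price rho (chosen rho k) == revenue (types k) rho).
Proof.
move=> ok; rewrite /chosen; case: pickP => [o //|none].
by have [o ho] := revenue_attained (types k) ok; rewrite none in ho.
Qed.

(* The constraints defining the polyhedron associated with rho: the box, and
   every type k weakly prefers the option it chooses in rho. *)
Definition active (rho : menuT) (r : constr) : bool :=
  if r is inl (k, o, _) then o == chosen rho k else true.

Lemma box_bounded rho (w : 'cV[R]_d) :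
  w != 0 -> exists2 r, active rho r & 0 < dotv (constr_row r) w.
Proof.
move=> w0; have [c wc] : exists c, w c 0 != 0.
  apply/existsP; apply: contraR w0 => /existsPn wc.
  by apply/eqP/matrixP => c j; rewrite (ord1 j) mxE; apply/eqP/negPn.
case/mxvec_indexP: c wc => j i wc.
case: (ltrP 0 (w (mxvec_index j i) 0)) => wji.
  by exists (inr (j, i, true)); rewrite //= dot_delta.
exists (inr (j, i, false)) => //=.
by rewrite dotvNl dot_delta oppr_gt0 lt_neqAle wc wji.
Qed.

Lemma menu_feasible rho : menu_ok H rho ->
  feasible constr_row constr_rhs (active rho) (vec_of_menu rho).
Proof.
move=> ok [[[k o] o']|[[j i] []]] /=.
- move/eqP => ->; rewrite dotvBl !dot_util_row vec_of_menuK subr_le0.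
  by have /andP [/forallP best _] := chosenP k ok.
- rewrite dot_delta coef_vec_of_menu /menu_coord /coord_bound => _.
  case: (unliftP ord0 i) => [i' ->|->]; last by rewrite eqxx; have [_ /andP [_ ->]] := ok j.
  by rewrite eq_sym (negbTE (neq_lift _ _)); have [/(_ i') /andP [_ ->] _] := ok j.
- rewrite dotvNl dot_delta coef_vec_of_menu /menu_coord oppr_le0 => _.
  case: (unliftP ord0 i) => [i' _|_]; last by have [_ /andP [-> _]] := ok j.
  by have [/(_ i') /andP [-> _] _] := ok j.
Qed.

Lemma vertex_expert rho (g : 'I_d -> constr) x :
  feasible constr_row constr_rhs (active rho) x ->
  \matrix_(i < d) constr_row (g i) \in unitmx ->
  (\matrix_(i < d) constr_row (g i)) *m x = \col_(i < d) constr_rhs (g i) ->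
  expert [ffun i => g i] = menu_of_vec x.
Proof.
move=> fx unit Mx; rewrite /expert.
have -> : \matrix_(i < d) constr_row ([ffun i => g i] i) = \matrix_(i < d) constr_row (g i).
  by apply/row_matrixP => i; rewrite !rowK ffunE.
have -> : \col_(i < d) constr_rhs ([ffun i => g i] i) = \col_(i < d) constr_rhs (g i).
  by apply/matrixP => i j; rewrite !mxE ffunE.
rewrite unit -Mx mulKmx //; suff -> : in_box x by [].
apply/forallP => j; apply/forallP => i; apply/andP; split.
  by have := fx (inr (j, i, false)) erefl; rewrite /= dotvNl dot_delta oppr_le0.
by have := fx (inr (j, i, true)) erefl; rewrite /= dot_delta.
Qed.

Lemma feasible_revenue rho x k : feasible constr_row constr_rhs (active rho) x ->
  opt_price (menu_of_vec x) (chosen rho k) <= revenue (types k) (menu_of_vec x).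
Proof.
move=> fx; apply: revenue_ge; apply/forallP => o'.
by have := fx (inl (k, chosen rho k, o')) (eqxx _); rewrite /= dotvBl !dot_util_row subr_le0.
Qed.

Lemma expert_cover (rho : menuT) (T : nat) (s : nat -> 'I_V) : menu_ok H rho ->
  exists G : expert_basis, \sum_(t < T) revenue (types (s t)) rho <=
                           \sum_(t < T) revenue (types (s t)) (expert G).
Proof.
move=> ok.
(* the total revenue along the chosen options is linear in the menu *)
pose c := \sum_(t < T) price_row (chosen rho (s t)).
have [g [x [fx cx unit Mx]]] :=
  lp_vertex c (box_bounded rho) (inr (Ordinal l_gt0, ord0, true)) (menu_feasible ok).
exists [ffun i => g i]; rewrite (vertex_expert fx unit Mx).
apply: (@le_trans _ _ (\sum_(t < T) opt_price (menu_of_vec x) (chosen rho (s t))));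
  last by apply: ler_sum => t _; exact: feasible_revenue.
move: cx; rewrite /c !dotv_suml; congr (_ <= _); apply: eq_bigr => t _.
  by rewrite dot_price_row vec_of_menuK; have /andP [_ /eqP] := chosenP (s t) ok.
by rewrite dot_price_row.
Qed.

End Experts.

Section Online.
Variables (R : realType) (m l : nat).
Local Notation menuT := (menu R m l).

Lemma In_map (A B : Type) (f : A -> B) (s : seq A) y :
  List.In y (map f s) -> exists x, y = f x.
Proof. by elim: s => //= x s IH [<-|/IH]; [exists x|]. Qed.

Lemma sum_In_ge0 (A : Type) (s : seq A) (F : A -> R) :
  (forall x, List.In x s -> 0 <= F x) -> 0 <= \sum_(x <- s) F x.
Proof.
elim: s => [|x s IH] F0; first by rewrite big_nil.
rewrite big_cons addr_ge0 //; first by apply: F0; left.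
by apply: IH => y sy; apply: F0; right.
Qed.

Lemma history_sum (u : nat -> menuT -> R) t rho :
  \sum_(f <- history u t) f rho = \sum_(k < t) u k rho.
Proof. by rewrite /history big_map -(subn0 t) -/(index_iota 0 t) big_mkord subn0. Qed.

(* No algorithm can have negative expected revenue, hence its regret against
   a menu with prices at most mH is at most T m H. *)
Lemma trivial_regret H (A : algorithm R m l) (v : nat -> 'I_m -> R) T (rho : menuT) :
  alg_valid H A -> 0 <= H -> menu_ok H rho ->
  \sum_(t < T) revenue (v t) rho - \sum_(t < T) alg_exp_rev A (fun t => revenue (v t)) t
    <= T%:R * (m%:R * H).
Proof.
move=> valid H0 ok; rewrite -[T%:R * _]subr0; apply: lerB.
  rewrite -[X in X%:R](card_ord T) mulr_natl -sumr_const.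
  by apply: ler_sum => t _; exact: revenue_le.
apply: sumr_ge0 => t _; apply: sum_In_ge0 => wr /(proj1 (valid _) wr) [w0 _].
by rewrite mulr_ge0 ?revenue_ge0.
Qed.

Definition hedge_alg (E : finType) (ex : E -> menuT) (eta : R) : algorithm R m l :=
  fun h => [seq (expR (eta * \sum_(f <- h) f (ex e)) /
                 (\sum_(e' : E) expR (eta * \sum_(f <- h) f (ex e'))), ex e) | e <- index_enum E].

Lemma hedge_alg_valid (E : finType) (e0 : E) (ex : E -> menuT) eta H :
  (forall e, menu_ok H (ex e)) -> alg_valid H (hedge_alg ex eta).
Proof.
move=> ok h; split.
  move=> wr in_h; have [e ->] := In_map in_h; split; last exact: ok.
  by rewrite divr_ge0 ?expR_ge0 ?sumr_ge0 // => i _; exact: expR_ge0.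
rewrite big_map -mulr_suml divff // gt_eqF //.
apply: lt_le_trans (expR_gt0 (eta * \sum_(f <- h) f (ex e0))) _.
by rewrite (bigD1 e0) //= lerDl; apply: sumr_ge0 => i _; exact: expR_ge0.
Qed.

Lemma hedge_alg_rev (E : finType) (ex : E -> menuT) eta (u : nat -> menuT -> R) t :
  alg_exp_rev (hedge_alg ex eta) u t = hedge_gain (fun t e => u t (ex e)) eta t.
Proof.
rewrite /alg_exp_rev /hedge_alg big_map /hedge_gain /hedge_prob /weight /total_weight /cumul /=.
by apply: eq_bigr => e _; rewrite !history_sum; under eq_bigr do rewrite history_sum.
Qed.

End Online.

Section Regret.
Variables (R : realType) (m l V : nat) (H : R) (types : 'I_V -> 'I_m -> R).
Hypotheses (H_gt0 : 0 < H) (l_gt0 : (0 < l)%N).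

Local Notation experts := (@expert R m l V H types).
Let some_basis : expert_basis m l V := [ffun _ => inr (Ordinal l_gt0, ord0, true)].

Let experts_ok G : menu_ok H (experts G).
Proof. by apply: expert_ok; exact: ltW. Qed.

Lemma hedge_experts_valid eta : alg_valid H (hedge_alg experts eta).
Proof. exact: (hedge_alg_valid some_basis). Qed.

Lemma hedge_menu_regret eta T (s : nat -> 'I_V) (rho : menu R m l) :
  0 < eta -> eta * (m%:R * H) <= 1/2 -> menu_ok H rho ->
  \sum_(t < T) revenue (types (s t)) rho -
  \sum_(t < T) alg_exp_rev (hedge_alg experts eta) (fun t => revenue (types (s t))) t
    <= ln #|{: expert_basis m l V}|%:R / eta + 2 * eta * (m%:R * H) ^+ 2 * T%:R.
Proof.
move=> eta_gt0 etaB ok; have [G coverG] := expert_cover types l_gt0 T s ok.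
under [X in _ - X]eq_bigr do rewrite hedge_alg_rev.
pose g t G' := revenue (types (s t)) (experts G').
have g_bound t G' : 0 <= g t G' <= m%:R * H.
  by rewrite /g revenue_ge0 (revenue_le _ (ltW H_gt0) (experts_ok G')).
apply: le_trans (hedge_regret some_basis g_bound eta_gt0 etaB T G).
by rewrite lerD2r.
Qed.

Lemma best_expert_no_regret (k : 'I_V) : exists A : algorithm R m l, alg_valid H A /\
  forall (s : nat -> 'I_V) T (rho : menu R m l), (forall t, s t = k) -> menu_ok H rho ->
  \sum_(t < T) revenue (types (s t)) rho -
  \sum_(t < T) alg_exp_rev A (fun t => revenue (types (s t))) t <= 0.
Proof.
pose best := Order.arg_max some_basis xpredT (fun G => revenue (types k) (experts G)).
exists (fun _ => [:: (1, experts best)]); split.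
  move=> h; split; last by rewrite big_cons big_nil addr0.
  by move=> wr [<-|[]]; split; [exact: ler01 | exact: experts_ok].
move=> s T rho sk ok; rewrite subr_le0 /alg_exp_rev.
have [G coverG] := expert_cover types l_gt0 T s ok.
apply: le_trans coverG _; apply: ler_sum => t _.
rewrite big_cons big_nil addr0 mul1r sk /best.
by case: arg_maxP => // G1 _; apply.
Qed.

End Regret.

Section Estimates.
Variable R : realType.

Lemma ln2_ge_half : 1/2 <= ln (2 : R).
Proof.
have e_half : expR (1/2 : R) <= 2.
  apply: le_trans (expR_le_quad _) _; last lra.
  by rewrite divr_ge0 //= ler_pdivrMr // mul1r ler1n.
by rewrite -ler_expR lnK ?posrE.
Qed.

Lemma ln_types_ge_half (V l : nat) : (1 < V)%N -> (0 < l)%N -> 1/2 <= ln (V%:R * l%:R : R).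
Proof.
move=> V_gt1 l_gt0; apply: le_trans ln2_ge_half _.
rewrite ler_ln ?posrE ?mulr_gt0 ?ltr0n 1?(ltn_trans _ V_gt1) // -natrM ler_nat.
by rewrite (leq_trans V_gt1) // leq_pmulr.
Qed.

Lemma ln_card_experts (m l V : nat) : (1 < V)%N -> (0 < l)%N -> (0 < m)%N ->
  ln (((V * l.+1 * l.+1 + l * m.+1 * 2) ^ (l * m.+1))%N%:R : R)
    <= 40 * m%:R ^+ 2 * l%:R * ln (V%:R * l%:R : R).
Proof.
move=> V_gt1 l_gt0 m_gt0.
set K := (V * l.+1 * l.+1 + l * m.+1 * 2)%N; set L := ln (V%:R * l%:R : R).
have L_ge : 1/2 <= L := ln_types_ge_half V_gt1 l_gt0.
have V_gt0 : (0 < V)%N by apply: ltn_trans V_gt1.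
have K_gt0 : (0 < K)%N by rewrite /K; lia.
rewrite natrX lnXn ?ltr0n // -[ln _ *+ _]mulr_natr.
have lnK : ln (K%:R : R) <= 8 + 2 * L + m%:R.
  have K_le : (K <= 8 * (V * l) * l * m)%N by rewrite /K; nia.
  apply: le_trans (_ : ln ((8 * (V * l) * l * m)%N%:R) <= _).
    by rewrite ler_ln ?posrE ?ltr0n ?ler_nat // !muln_gt0 V_gt0 l_gt0 m_gt0.
  rewrite !natrM !lnM ?posrE ?mulr_gt0 ?ltr0n //.
  have L_split : L = ln (V%:R : R) + ln (l%:R : R) by rewrite /L lnM ?posrE ?ltr0n.
  have ln8 : ln (8 : R) < 8 by apply: ln_sublinear.
  have lnm : ln (m%:R : R) < m%:R by apply: ln_sublinear; rewrite ltr0n.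
  have lnl : ln (l%:R : R) <= L.
    by rewrite /L ler_ln ?posrE ?mulr_gt0 ?ltr0n // -natrM ler_nat leq_pmull.
  lra.
have lnK0 : 0 <= ln (K%:R : R) by rewrite ln_ge0 // ler1n.
have d_le : ((l * m.+1)%N%:R : R) <= 2 * m%:R * l%:R.
  by rewrite -[2]/(2%:R) -!natrM ler_nat; nia.
have m1 : (1 : R) <= m%:R by rewrite ler1n.
have ml0 : 0 <= m%:R * l%:R :> R by rewrite mulr_ge0 ?ler0n.
apply: le_trans (_ : ln K%:R * (2 * m%:R * l%:R) <= _); first exact: ler_wpM2l.
apply: le_trans (_ : (8 + 2 * L + m%:R) * (2 * m%:R * l%:R) <= _).
  by apply: ler_wpM2r => //; rewrite !mulr_ge0 ?ler0n.
have coef_le : 16 + 4 * L + 2 * m%:R <= 40 * m%:R * L.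
  have : 0 <= (m%:R - 1) * L by apply: mulr_ge0; lra.
  have : 0 <= m%:R * (2 * L - 1) by apply: mulr_ge0; lra.
  lra.
rewrite [leLHS](_ : _ = (16 + 4 * L + 2 * m%:R) * (m%:R * l%:R)); last by ring.
rewrite [leRHS](_ : _ = 40 * m%:R * L * (m%:R * l%:R)); last by ring.
exact: ler_wpM2r.
Qed.

Lemma eta_small (m : nat) (H sT : R) : 0 < H -> m%:R <= sT -> (0 < m)%N ->
  (2 * H * sT)^-1 * (m%:R * H) <= 1/2.
Proof.
move=> H_gt0 m_le m_gt0; have sT_gt0 : 0 < sT by apply: lt_le_trans m_le; rewrite ltr0n.
have -> : (2 * H * sT)^-1 * (m%:R * H) = m%:R / (2 * sT) by field; rewrite !gt_eqF.
by rewrite ler_pdivrMr ?mulr_gt0 //; lra.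
Qed.

Lemma hedge_rate (m l : nat) (H sT L lnN : R) :
  0 < H -> 0 < sT -> 1/2 <= L -> (0 < l)%N -> lnN <= 40 * m%:R ^+ 2 * l%:R * L ->
  lnN / (2 * H * sT)^-1 + 2 * (2 * H * sT)^-1 * (m%:R * H) ^+ 2 * (sT * sT)
    <= 100 * m%:R ^+ 2 * H * l%:R * sT * L.
Proof.
move=> H_gt0 sT_gt0 L_ge l_gt0 lnN_le.
have -> : lnN / (2 * H * sT)^-1 + 2 * (2 * H * sT)^-1 * (m%:R * H) ^+ 2 * (sT * sT) =
    H * sT * (2 * lnN + m%:R ^+ 2) by field; rewrite !gt_eqF.
rewrite [leRHS](_ : _ = H * sT * (100 * m%:R ^+ 2 * l%:R * L)); last by ring.
rewrite ler_pM2l ?mulr_gt0 //.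
have l1 : (1 : R) <= l%:R by rewrite ler1n.
have lL : 1/2 <= l%:R * L by nra.
set M := m%:R ^+ 2; have M0 : 0 <= M by rewrite exprn_ge0 ?ler0n.
have M_le : M <= 2 * (M * (l%:R * L)).
  rewrite -subr_ge0 [X in 0 <= X](_ : _ = M * (2 * (l%:R * L) - 1)); last by ring.
  by rewrite mulr_ge0 //; lra.
rewrite [leRHS](_ : _ = 100 * (M * (l%:R * L))); last by ring.
move: lnN_le; have -> : 40 * M * l%:R * L = 40 * (M * (l%:R * L)) by ring.
lra.
Qed.

Lemma trivial_rate (m l : nat) (H sT L : R) :
  0 < H -> 0 <= sT -> sT < m%:R -> 1/2 <= L -> (0 < l)%N ->
  sT * sT * (m%:R * H) <= 100 * m%:R ^+ 2 * H * l%:R * sT * L.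
Proof.
move=> H_gt0 sT_ge0 sT_lt L_ge l_gt0.
rewrite [leLHS](_ : _ = H * sT * m%:R * sT); last by ring.
rewrite [leRHS](_ : _ = H * sT * m%:R * (m%:R * (100 * l%:R * L))); last by ring.
apply: ler_wpM2l; first by rewrite !mulr_ge0 ?ler0n // ltW.
have l1 : (1 : R) <= l%:R by rewrite ler1n.
have coef_ge1 : 1 <= 100 * l%:R * L by nra.
exact: le_trans (ltW sT_lt) (ler_peMr (ler0n _ _) coef_ge1).
Qed.

Lemma rate_ge0 (m l V T : nat) (C H : R) : 0 <= C -> 0 <= H -> (0 < V)%N -> (0 < l)%N ->
  0 <= C * m%:R ^+ 2 * H * l%:R * Num.sqrt T%:R * ln (V%:R * l%:R : R).
Proof.
move=> C0 H0 V_gt0 l_gt0.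
by rewrite !mulr_ge0 ?exprn_ge0 ?ler0n ?sqrtr_ge0 // ln_ge0 // -natrM ler1n muln_gt0 V_gt0.
Qed.

End Estimates.

Theorem mainTheorem19 (R : realType) :
  exists C : R, 0 < C /\
  forall (m l V T : nat) (H : R),
    (0 < m)%N -> (0 < l)%N -> (0 < V)%N -> 0 < H ->
    forall types : 'I_V -> 'I_m -> R,
      (forall k i, 0 <= types k i <= H) ->
      exists A : algorithm R m l,
        alg_valid H A /\
        forall s : nat -> 'I_V,
          let u := fun t => revenue (types (s t)) in
          forall rho : menu R m l, menu_ok H rho ->
            \sum_(t < T) u t rho - \sum_(t < T) alg_exp_rev A u t
            <= C * m%:R ^+ 2 * H * l%:R * Num.sqrt T%:R * ln (V%:R * l%:R).
Proof.
exists 100; split => // m l V T H m_gt0 l_gt0 V_gt0 H_gt0 types _.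
case: (leqP V 1) => [V_le1|V_gt1].
(* a single buyer type: play the best expert *)
  have [A [valid no_regret]] := best_expert_no_regret types H_gt0 l_gt0 (Ordinal V_gt0).
  exists A; split => // s u rho ok.
  have single : forall t, s t = Ordinal V_gt0.
    by move=> t; apply: val_inj => /=; have := ltn_ord (s t); lia.
  apply: le_trans (no_regret s T rho single ok) _.
  by apply: rate_ge0 => //; exact: ltW.
have L_ge := ln_types_ge_half R V_gt1 l_gt0.
set sT := Num.sqrt T%:R; have sTT : sT * sT = T%:R by rewrite -expr2 sqr_sqrtr ?ler0n.
exists (hedge_alg (@expert R m l V H types) (2 * H * sT)^-1).
split => [|s u rho ok]; first exact: hedge_experts_valid.
case: (lerP m%:R sT) => [m_le_sT|sT_lt_m].
- have sT_gt0 : 0 < sT by apply: lt_le_trans m_le_sT; rewrite ltr0n.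
  have eta_gt0 : 0 < (2 * H * sT)^-1 by rewrite invr_gt0 !mulr_gt0.
  have eta_le := eta_small H_gt0 m_le_sT m_gt0.
  apply: le_trans (hedge_menu_regret types H_gt0 l_gt0 T s eta_gt0 eta_le ok) _.
  rewrite card_expert_basis -sTT; apply: hedge_rate => //; exact: ln_card_experts.
- have valid := hedge_experts_valid types H_gt0 l_gt0 (2 * H * sT)^-1.
  apply: le_trans (trivial_regret _ T valid (ltW H_gt0) ok) _.
  by rewrite -sTT; apply: trivial_rate; rewrite ?sqrtr_ge0.
Qed.
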